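(* Let $C$ be a category with a variance $(E,M)$ and let $D$ be a category. Let $G\colon E\rightarrow D$ and $H\colon M\rightarrow D$ be (covariant) functors which are compatible, meaning: $G$ and $H$ agree on objects, and $$H(f^m)\,G(f^e) = G(f_e)\,H(f_m)$$ for every morphism $f$ of $C$. Then there exists a unique functor $F\colon C\rightarrow D$ whose restriction to $E$ is $G$ and whose restriction to $M$ is $H$.
   Context: A strict factorization system on a category $C$ is a pair $(E,M)$ of subcategories of $C$, both containing all objects of $C$, such that every morphism $f$ of $C$ factors uniquely as $f=me$ with $e$ a morphism of $E$ and $m$ a morphism of $M$. A variance on $C$ is a pair $(E,M)$ such that both $(E,M)$ and $(M,E)$ are strict factorization systems on $C$. For a morphism $f\colon x\rightarrow y$ of $C$, write its unique factorizations as $f=f^m f^e$ with $f^e\colon x\rightarrow f_t$ in $E$ and $f^m\colon f_t\rightarrow y$ in $M$ (the terminating factorization), and $f=f_e f_m$ with $f_m\colon x\rightarrow f_s$ in $M$ and $f_e\colon f_s\rightarrow y$ in $E$ (the starting factorization). *)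

Set Implicit Arguments.
Unset Strict Implicit.

Record Category := {
  ob :> Type;
  hom : ob -> ob -> Type;
  idm : forall x, hom x x;
  comp : forall x y z, hom y z -> hom x y -> hom x z;
  comp_idl : forall x y (f : hom x y), comp (idm y) f = f;
  comp_idr : forall x y (f : hom x y), comp f (idm x) = f;
  comp_assoc : forall x y z w (f : hom x y) (g : hom y z) (h : hom z w),
      comp h (comp g f) = comp (comp h g) f
}.

Arguments hom {c} _ _.
Arguments idm {c} _.
Arguments comp {c x y z} _ _.

Record WideSubcat (C : Category) := {
  mem : forall x y : C, hom x y -> Prop;
  mem_id : forall x : C, mem (idm x);
  mem_comp : forall (x y z : C) (g : hom y z) (f : hom x y),
      mem f -> mem g -> mem (comp g f)
}.

Arguments mem {C} _ {x y} _.

(* (E, M) is a strict factorization system: every f factors uniquely as f = m e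
   with e in E and m in M.  Uniqueness is uniqueness of the triple
   (middle object, e, m) as a dependent pair. *)
Definition strict_factorization (C : Category) (E M : WideSubcat C) : Prop :=
  forall (x y : C) (f : hom x y),
    (exists (t : C) (e : hom x t) (m : hom t y),
        mem E e /\ mem M m /\ f = comp m e) /\
    (forall (t t' : C) (e : hom x t) (m : hom t y) (e' : hom x t') (m' : hom t' y),
        mem E e -> mem M m -> f = comp m e ->
        mem E e' -> mem M m' -> f = comp m' e' ->
        existT (fun s : C => (hom x s * hom s y)%type) t (e, m)
        = existT (fun s : C => (hom x s * hom s y)%type) t' (e', m')).

Definition variance (C : Category) (E M : WideSubcat C) : Prop :=
  strict_factorization E M /\ strict_factorization M E.

Record SubFunctor (C : Category) (E : WideSubcat C) (D : Category) (o : C -> D) := {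
  smap : forall (x y : C) (f : hom x y), mem E f -> hom (o x) (o y);
  smap_id : forall (x : C) (p : mem E (idm x)), smap p = idm (o x);
  smap_comp : forall (x y z : C) (g : hom y z) (f : hom x y)
      (pg : mem E g) (pf : mem E f) (pgf : mem E (comp g f)),
      smap pgf = comp (smap pg) (smap pf)
}.

Arguments smap {C E D o} _ {x y} f _.

Definition is_functor (C D : Category) (o : C -> D)
    (F : forall x y : C, hom x y -> hom (o x) (o y)) : Prop :=
  (forall x : C, F x x (idm x) = idm (o x)) /\
  (forall (x y z : C) (g : hom y z) (f : hom x y),
      F x z (comp g f) = comp (F y z g) (F x y f)).

(* Compatibility of G : E -> D and H : M -> D (sharing the object map o):
   H(f^m) G(f^e) = G(f_e) H(f_m) for the terminating factorization f = f^m f^e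
   (f^e in E, f^m in M) and the starting factorization f = f_e f_m
   (f_m in M, f_e in E). *)
Definition compatible (C D : Category) (E M : WideSubcat C) (o : C -> D)
    (G : @SubFunctor C E D o) (H : @SubFunctor C M D o) : Prop :=
  forall (x y : C) (f : hom x y)
    (t : C) (fe : hom x t) (fm : hom t y) (pe : mem E fe) (pm : mem M fm),
    f = comp fm fe ->
    forall (s : C) (fm' : hom x s) (fe' : hom s y) (pm' : mem M fm') (pe' : mem E fe'),
    f = comp fe' fm' ->
    comp (smap H fm pm) (smap G fe pe) = comp (smap G fe' pe') (smap H fm' pm').

(** Any extension must send [f = f^m f^e] to [H(f^m) G(f^e)], and uniqueness
    of the terminating factorization makes this a well-defined map [F].  It
    restricts to [G] and [H] because identities lie in both [E] and [M].  For
    functoriality write [g f = g^m k f^e] with [k = g^e f^m]: the pair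
    [(f^m, g^e)] is a starting factorization of [k], so compatibility turns
    [G(g^e) H(f^m)] into [H(k^m) G(k^e)], and [(k^e f^e, g^m k^m)] is the
    terminating factorization of [g f].  Only the [(E, M)] half of the
    variance is needed. *)
From Corelib Require Import ssreflect.
From Stdlib Require Import ClassicalEpsilon ProofIrrelevance Eqdep.

Set Implicit Arguments.
Unset Strict Implicit.

Section Extension.

Variables (C D : Category) (E M : WideSubcat C) (o : C -> D).

Lemma smap_irrelevant (K : WideSubcat C) (F : @SubFunctor C K D o)
    (x y : C) (f : hom x y) (p p' : mem K f) :
  smap F f p = smap F f p'.
Proof. by rewrite (proof_irrelevance _ p p'). Qed.

Record em_factorization (x y : C) (f : hom x y) : Type := EMFactorization {
  fact_ob : C;
  fact_e : hom x fact_ob;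
  fact_m : hom fact_ob y;
  fact_e_mem : mem E fact_e;
  fact_m_mem : mem M fact_m;
  fact_eq : f = comp fact_m fact_e
}.

Arguments em_factorization {x y} f.

Hypothesis EM_fact : strict_factorization E M.
Variables (G : @SubFunctor C E D o) (H : @SubFunctor C M D o).

Lemma em_factorization_inhabited (x y : C) (f : hom x y) :
  inhabited (em_factorization f).
Proof.
have [[t [e [m [pe [pm ->]]]]] _] := EM_fact f.
exact: (inhabits (EMFactorization pe pm eq_refl)).
Qed.

Lemma comp_smap_em_factorization_unique (x y t t' : C) (f : hom x y)
    (e : hom x t) (m : hom t y) (e' : hom x t') (m' : hom t' y)
    (pe : mem E e) (pm : mem M m) (pe' : mem E e') (pm' : mem M m') :
  f = comp m e -> f = comp m' e' ->
  comp (smap H m pm) (smap G e pe) = comp (smap H m' pm') (smap G e' pe').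
Proof.
move=> def_f def_f'.
have same := proj2 (EM_fact f) _ _ _ _ _ _ pe pm def_f pe' pm' def_f'.
have same_ob : t = t' by exact: (f_equal (@projT1 _ _) same).
subst t'; case: (inj_pair2 _ _ _ _ _ same) => same_e same_m; subst e' m'.
by rewrite (smap_irrelevant G pe pe') (smap_irrelevant H pm pm').
Qed.

Definition chosen_factorization (x y : C) (f : hom x y) : em_factorization f :=
  epsilon (em_factorization_inhabited f) (fun _ => True).

Definition extension (x y : C) (f : hom x y) : hom (o x) (o y) :=
  let fact := chosen_factorization f in
  comp (smap H (fact_m fact) (fact_m_mem fact)) (smap G (fact_e fact) (fact_e_mem fact)).

Lemma extension_factorization (x y t : C) (f : hom x y)
    (e : hom x t) (m : hom t y) (pe : mem E e) (pm : mem M m) :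
  f = comp m e -> extension f = comp (smap H m pm) (smap G e pe).
Proof.
rewrite /extension; case: (chosen_factorization f) => t0 e0 m0 pe0 pm0 def_f0 /= def_f.
exact: comp_smap_em_factorization_unique def_f0 def_f.
Qed.

Lemma extension_E (x y : C) (f : hom x y) (p : mem E f) :
  extension f = smap G f p.
Proof.
rewrite (extension_factorization p (mem_id M y) (eq_sym (comp_idl f))).
by rewrite smap_id comp_idl.
Qed.

Lemma extension_M (x y : C) (f : hom x y) (p : mem M f) :
  extension f = smap H f p.
Proof.
rewrite (extension_factorization (mem_id E x) p (eq_sym (comp_idr f))).
by rewrite smap_id comp_idr.
Qed.

Lemma extension_unique (F : forall x y : C, hom x y -> hom (o x) (o y)) :
  is_functor F ->
  (forall (x y : C) (f : hom x y) (p : mem E f), F x y f = smap G f p) ->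
  (forall (x y : C) (f : hom x y) (p : mem M f), F x y f = smap H f p) ->
  forall (x y : C) (f : hom x y), F x y f = extension f.
Proof.
move=> [_ F_comp] FE FM x y f.
have [[t [e [m [pe [pm def_f]]]]] _] := EM_fact f.
by rewrite (extension_factorization pe pm def_f) def_f F_comp (FE _ _ e pe) (FM _ _ m pm).
Qed.

Hypothesis GH_compat : compatible G H.

Lemma extension_is_functor : is_functor extension.
Proof.
split=> [x | x y z g f]; first by rewrite (extension_E (mem_id E x)) smap_id.
have [[tf [ef [mf [pef [pmf def_f]]]]] _] := EM_fact f.
have [[tg [eg [mg [peg [pmg def_g]]]]] _] := EM_fact g.
have [[t [e [m [pe [pm def_k]]]]] _] := EM_fact (comp eg mf).
have swap := GH_compat pe pm def_k pmf peg eq_refl.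
have def_gf : comp g f = comp (comp mg m) (comp e ef).
  by rewrite def_f def_g -!comp_assoc (comp_assoc ef mf eg) def_k -comp_assoc.
rewrite (extension_factorization (mem_comp pef pe) (mem_comp pm pmg) def_gf).
rewrite (extension_factorization peg pmg def_g) (extension_factorization pef pmf def_f).
rewrite (smap_comp H pmg pm) (smap_comp G pe pef).
rewrite -!comp_assoc (comp_assoc (smap G ef pef) (smap G e pe) (smap H m pm)) swap.
by rewrite -comp_assoc.
Qed.

End Extension.

Theorem mainTheorem1 (C D : Category) (E M : WideSubcat C)
    (Hvar : variance E M) (o : C -> D)
    (G : @SubFunctor C E D o) (H : @SubFunctor C M D o)
    (Hcompat : compatible G H) :
  exists F : forall x y : C, hom x y -> hom (o x) (o y),
    is_functor F /\
    (forall (x y : C) (f : hom x y) (p : mem E f), F x y f = smap G f p) /\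
    (forall (x y : C) (f : hom x y) (p : mem M f), F x y f = smap H f p) /\
    (forall F' : forall x y : C, hom x y -> hom (o x) (o y),
        is_functor F' ->
        (forall (x y : C) (f : hom x y) (p : mem E f), F' x y f = smap G f p) ->
        (forall (x y : C) (f : hom x y) (p : mem M f), F' x y f = smap H f p) ->
        forall (x y : C) (f : hom x y), F' x y f = F x y f).
Proof.
exists (extension (proj1 Hvar) G H); split; first exact: extension_is_functor.
split; first exact: extension_E.
split; first exact: extension_M.
exact: extension_unique.
Qed.
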